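(* Let $s\in\{0,1\}$, $s'=1-s$, let $\mathbf{T}_s$ be any transport map from $\mathcal{P}_s$ to $\mathcal{P}_{s'}$, let $\delta\ge0$, and let $f:\mathcal{X}\times\{0,1\}\to[0,1]$ be a measurable model. If $\Delta\mathrm{MDP}(f,\mathbf{T}_s)\le\delta$, then $\Delta\mathrm{WDP}(f)\le\delta$ and $\Delta\overline{\mathrm{DP}}(f)\le\delta$.
   Context: Setting: $(\mathbf{X},Y,S)$ is a random tuple with $\mathbf{X}\in\mathcal{X}\subset\mathbb{R}^d$ and binary sensitive attribute $S\in\{0,1\}$; $\mathcal{P}_s$ is the conditional distribution of $\mathbf{X}$ given $S=s$ (assumed absolutely continuous w.r.t. Lebesgue measure), $\mathbb{E}_s$ its expectation. A transport map from $\mathcal{P}_s$ to $\mathcal{P}_{s'}$ is a map $\mathbf{T}$ with $\mathbf{T}_{\#}\mathcal{P}_s=\mathcal{P}_{s'}$. $\mathcal{P}_{f_s}$ is the distribution of $f(\mathbf{X},s)$ with $\mathbf{X}\sim\mathcal{P}_s$. Definitions: $\Delta\mathrm{MDP}(f,\mathbf{T}_s):=\mathbb{E}_s|f(\mathbf{X},s)-f(\mathbf{T}_s(\mathbf{X}),s')|$; $\Delta\mathrm{WDP}(f):=\mathcal{W}(\mathcal{P}_{f_0},\mathcal{P}_{f_1})$ where $\mathcal{W}$ is the 1-Wasserstein distance $\mathcal{W}(\mathcal{Q}_1,\mathcal{Q}_2)=\inf_{\gamma}\mathbb{E}_{(x,y)\sim\gamma}|x-y|$ over couplings $\gamma$ of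 $\mathcal{Q}_1,\mathcal{Q}_2$; $\Delta\overline{\mathrm{DP}}(f):=|\mathbb{E}(f(\mathbf{X},0)\mid S=0)-\mathbb{E}(f(\mathbf{X},1)\mid S=1)|$. *)

From HB Require Import structures.
From mathcomp Require Import all_boot all_order all_algebra.
From mathcomp Require Import all_classical all_reals all_analysis.
Set Implicit Arguments. Unset Strict Implicit. Unset Printing Implicit Defensive.
Import Order.TTheory GRing.Theory Num.Theory.
Local Open Scope classical_set_scope.
Local Open Scope ring_scope.
Local Open Scope ereal_scope.

Definition coupling (R : realType) (Q1 Q2 : set R -> \bar R)
  (g : probability (R * R)%type R) : Prop :=
  (forall A : set R, measurable A -> g (fst @^-1` A) = Q1 A) /\
  (forall A : set R, measurable A -> g (snd @^-1` A) = Q2 A).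

Definition W1 (R : realType) (Q1 Q2 : set R -> \bar R) : \bar R :=
  ereal_inf [set \int[g]_z (`|z.1 - z.2|%R)%:E | g in coupling Q1 Q2].

Definition law_f (d : measure_display) (T : measurableType d) (R : realType)
  (P : bool -> probability T R) (f : T -> bool -> R) (s : bool) : set R -> \bar R :=
  fun A => P s ((fun x => f x s) @^-1` A).

Definition DeltaMDP (d : measure_display) (T : measurableType d) (R : realType)
  (P : bool -> probability T R) (f : T -> bool -> R) (s : bool) (Ts : T -> T) : \bar R :=
  \int[P s]_x (`|f x s - f (Ts x) (~~ s)|%R)%:E.

Definition DeltaWDP (d : measure_display) (T : measurableType d) (R : realType)
  (P : bool -> probability T R) (f : T -> bool -> R) : \bar R :=
  W1 (law_f P f false) (law_f P f true).

Definition DeltaDPbar (d : measure_display) (T : measurableType d) (R : realType)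
  (P : bool -> probability T R) (f : T -> bool -> R) : \bar R :=
  `| \int[P false]_x (f x false)%:E - \int[P true]_x (f x true)%:E |.

Definition transport_map (d : measure_display) (T : measurableType d) (R : realType)
  (P Q : probability T R) (Ts : T -> T) : Prop :=
  measurable_fun setT Ts /\
  forall A : set T, measurable A -> P (Ts @^-1` A) = Q A.

From HB Require Import structures.
From mathcomp Require Import all_boot all_order all_algebra.
From mathcomp Require Import all_classical all_reals all_analysis.
From mathcomp Require Import measurable_realfun.
Import Order.TTheory GRing.Theory Num.Theory.
Local Open Scope classical_set_scope.
Local Open Scope ring_scope.

(* The transport map couples X ~ P_s with T_s(X) ~ P_s', so the pair
   (f(X, s), f(T_s(X), s')) is a coupling of the two output laws whose cost
   is exactly ΔMDP; hence ΔWDP <= ΔMDP.  ΔDP-bar is the gap between the means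
   of the two coordinates of the same coupling, which is at most the mean of
   their absolute difference. *)

Lemma W1_le_integral_dist (R : realType) (d : measure_display)
    (T : measurableType d) (Q : probability T R) (a b : T -> R)
    (Q1 Q2 : set R -> \bar R) :
  measurable_fun setT a -> measurable_fun setT b ->
  (forall A, measurable A -> Q (a @^-1` A) = Q1 A) ->
  (forall A, measurable A -> Q (b @^-1` A) = Q2 A) ->
  (W1 Q1 Q2 <= \int[Q]_x (`|a x - b x|)%:E)%E.
Proof.
move=> ma mb lawa lawb.
have mab : measurable_fun setT (fun x => (a x, b x)) by exact: measurable_fun_pair.
pose ab : {mfun T >-> (R * R)%type} :=
  HB.pack (fun x => (a x, b x)) (isMeasurableFun.Build _ _ _ _ _ mab).
apply: ereal_inf_lbound; exists (distribution Q ab).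
  by split=> A mA; [exact: lawa | exact: lawb].
rewrite ge0_integral_pushforward //.
apply/measurable_EFinP; apply: measurableT_comp => //.
exact: measurable_funB.
Qed.

Lemma abse_integralB_le (R : realType) (d : measure_display)
    (T : measurableType d) (mu : measure T R) (a b : T -> R) :
  mu.-integrable setT (EFin \o a) -> mu.-integrable setT (EFin \o b) ->
  (`| \int[mu]_x (a x)%:E - \int[mu]_x (b x)%:E |
     <= \int[mu]_x (`|a x - b x|)%:E)%E.
Proof.
move=> ia ib; rewrite -integralB_EFin //; apply: le_abse_integral => //.
exact: emeasurable_funB (measurable_int _ ia) (measurable_int _ ib).
Qed.

Lemma unit_valued_integrable (R : realType) (d : measure_display)
    (T : measurableType d) (mu : probability T R) (h : T -> R) :
  measurable_fun setT h -> (forall x, 0 <= h x <= 1) ->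
  mu.-integrable setT (EFin \o h).
Proof.
move=> mh h01; apply: measurable_bounded_integrable => //.
  by apply: le_lt_trans (probability_le1 _ _) _; rewrite ?ltry.
exists 1; split; first by [].
move=> M M1 x _; have /andP[h0 h1] := h01 x.
by rewrite /= ger0_norm // (le_trans h1) // ltW.
Qed.

Section TransportMap.
Context {R : realType} {d : measure_display} {T : measurableType d}.
Variables (P Q : probability T R) (Ts : T -> T).
Hypothesis transport_Ts : transport_map P Q Ts.

Lemma transport_map_preimage (d' : measure_display) (U : measurableType d')
    (h : T -> U) (A : set U) :
  measurable_fun setT h -> measurable A ->
  P ((h \o Ts) @^-1` A) = Q (h @^-1` A).
Proof.
move=> mh mA; case: transport_Ts => _ PTs; rewrite -PTs //.
by rewrite -[X in measurable X]setTI; exact: mh.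
Qed.

Lemma transport_map_integral (h : T -> \bar R) :
  measurable_fun setT h -> (forall x, (0 <= h x)%E) ->
  (\int[Q]_x h x = \int[P]_x h (Ts x))%E.
Proof.
move=> mh h0; case: transport_Ts => mTs PTs.
rewrite (eq_measure_integral (pushforward P Ts)); last first.
  by move=> A mA _; symmetry; exact: PTs.
by rewrite ge0_integral_pushforward.
Qed.

End TransportMap.

Section TransportCoupling.
Context {R : realType} {d : measure_display} {T : measurableType d}.
Context {P : bool -> probability T R} {s : bool} {Ts : T -> T}
  {f : T -> bool -> R}.
Hypotheses (transport_Ts : transport_map (P s) (P (~~ s)) Ts)
  (mf : forall b, measurable_fun setT (fun x => f x b))
  (f01 : forall x b, 0 <= f x b <= 1).

Let measurable_f_transport : measurable_fun setT (fun x => f (Ts x) (~~ s)).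
Proof. by case: transport_Ts => mTs _; exact: measurableT_comp (mf _) mTs. Qed.

Let law_f_transport (A : set R) : measurable A ->
  P s ((fun x => f (Ts x) (~~ s)) @^-1` A) = law_f P f (~~ s) A.
Proof. exact: transport_map_preimage. Qed.

Let DeltaMDP_swap :
  DeltaMDP P f s Ts = (\int[P s]_x (`|f (Ts x) (~~ s) - f x s|)%:E)%E.
Proof. by apply: eq_integral => x _; rewrite distrC. Qed.

Lemma W1_law_f_le_DeltaMDP :
  (W1 (law_f P f s) (law_f P f (~~ s)) <= DeltaMDP P f s Ts)%E.
Proof. exact: W1_le_integral_dist (mf s) measurable_f_transport _ _. Qed.

Lemma W1_law_f_swap_le_DeltaMDP :
  (W1 (law_f P f (~~ s)) (law_f P f s) <= DeltaMDP P f s Ts)%E.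
Proof.
by rewrite DeltaMDP_swap; exact: W1_le_integral_dist measurable_f_transport (mf s) _ _.
Qed.

Let integral_f_transport :
  (\int[P (~~ s)]_x (f x (~~ s))%:E = \int[P s]_x (f (Ts x) (~~ s))%:E)%E.
Proof.
apply: transport_map_integral => //; first exact/measurable_EFinP.
by move=> x; rewrite lee_fin; case/andP: (f01 x (~~ s)).
Qed.

Let integrable_f : (P s).-integrable setT (EFin \o (fun x => f x s)).
Proof. exact: unit_valued_integrable. Qed.

Let integrable_f_transport :
  (P s).-integrable setT (EFin \o (fun x => f (Ts x) (~~ s))).
Proof. exact: unit_valued_integrable. Qed.

Lemma mean_gap_le_DeltaMDP :
  (`| \int[P s]_x (f x s)%:E - \int[P (~~ s)]_x (f x (~~ s))%:E |
     <= DeltaMDP P f s Ts)%E.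
Proof. by rewrite integral_f_transport; exact: abse_integralB_le. Qed.

Lemma mean_gap_swap_le_DeltaMDP :
  (`| \int[P (~~ s)]_x (f x (~~ s))%:E - \int[P s]_x (f x s)%:E |
     <= DeltaMDP P f s Ts)%E.
Proof.
by rewrite integral_f_transport DeltaMDP_swap; exact: abse_integralB_le.
Qed.

End TransportCoupling.

Theorem mainTheorem5 (R : realType) (d : measure_display) (T : measurableType d)
  (P : bool -> probability T R) (s : bool) (Ts : T -> T) (delta : R)
  (f : T -> bool -> R) :
  transport_map (P s) (P (~~ s)) Ts ->
  (0 <= delta) ->
  (forall b, measurable_fun setT (fun x => f x b)) ->
  (forall x b, 0 <= f x b <= 1) ->
  (DeltaMDP P f s Ts <= delta%:E)%E ->
  (DeltaWDP P f <= delta%:E)%E /\ (DeltaDPbar P f <= delta%:E)%E.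
Proof.
move=> transport_Ts _ mf f01 MDP_le.
have W1_le := W1_law_f_le_DeltaMDP transport_Ts mf.
have W1_swap_le := W1_law_f_swap_le_DeltaMDP transport_Ts mf.
have gap_le := mean_gap_le_DeltaMDP transport_Ts mf f01.
have gap_swap_le := mean_gap_swap_le_DeltaMDP transport_Ts mf f01.
rewrite /DeltaWDP /DeltaDPbar; split; apply: le_trans MDP_le.
- by case: s {transport_Ts gap_le gap_swap_le} W1_le W1_swap_le.
- by case: s {transport_Ts W1_le W1_swap_le} gap_le gap_swap_le.
Qed.
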